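(* Let $N\ge2$, let $\rho_1,\dots,\rho_N$ be two-qubit density operators ($\rho_k$ on qubits $((k-1)_2,k_1)$) with fidelities $F_k=\langle\Psi_{00}|\rho_k|\Psi_{00}\rangle$, let $\rho_{\mathrm{in}}=\bigotimes_k\rho_k$, and let $\mathcal P$ be any swap-and-correct protocol with non-postselected swapping channel $\Lambda_{\mathcal P}$. Let $F'=\langle\Psi_{00}|\Lambda_{\mathcal P}(\rho_{\mathrm{in}})|\Psi_{00}\rangle$ and $F'_{\mathcal W}=\langle\Psi_{00}|\Lambda_{\mathcal P}(\bigotimes_{k}\mathcal W(\rho_k))|\Psi_{00}\rangle$. If $\epsilon_k=1-F_k<\epsilon$ for all $k$, then $$|F'-F'_{\mathcal W}|\le\binom N2\epsilon^2+\mathcal O(N^3\epsilon^3).$$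
   Context: Bell states: $|\Psi_{mn}\rangle=(I_2\otimes X^mZ^n)\tfrac{1}{\sqrt2}(|00\rangle+|11\rangle)$. Werner twirl: $\mathcal W(\rho)=\frac{4F-1}{3}|\Psi_{00}\rangle\langle\Psi_{00}|+\frac{1-F}{3}I_4$ with $F=\langle\Psi_{00}|\rho|\Psi_{00}\rangle$. Let $A=\{I,X,Z,XZ\}$. Repeater chain: nodes $0,\dots,N$; end node $0$ holds qubit $0_2$, end node $N$ holds qubit $N_1$, each repeater node $k\in\{1,\dots,N-1\}$ holds qubits $k_1,k_2$. A syndrome $\vec s\in A^{N-1}$ has $s_k=X^mZ^n$ meaning the Bell-state measurement at node $k$ on $(k_1,k_2)$ projected onto $|\Psi_{s_k}\rangle:=|\Psi_{mn}\rangle_{k_1k_2}$. A swap-and-correct protocol is a map $\mathcal P:A^{N-1}\to A^{N+1}$, $\vec s\mapsto(\mathcal P_0(\vec s),\dots,\mathcal P_N(\vec s))$ (Pauli corrections at nodes $0,\dots,N$; for repeater nodes applied to qubit $k_1$ before the BSM) such that (A) for some permutation $\alpha$ of $\{1,\dots,N-1\}$, each $\mathcal P_{\alpha(k)}(\vec s)$ depends only on $s_{\alpha(1)},\dots,s_{\alpha(k-1)}$; (B) for every $\vec s$ the normalised output from $|\Psi_{00}\rangle\langle\Psi_{00}|^{\otimes N}$ is $|\Psi_{00}\rangle\langle\Psi_{00}|$. With $C_{\vec s}$ applying $\mathcal P_0(\vec s)$ to $0_2$, $\mathcal P_N(\vec s)$ to $N_1$ and $\mathcal P_k(\vec s)$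 to $k_1$, set $\Lambda_{\mathcal P,\vec s}(\rho)=\mathrm{Tr}_{\text{repeaters}}[(\bigotimes_{k}|\Psi_{s_k}\rangle\langle\Psi_{s_k}|)C_{\vec s}\rho C_{\vec s}^\dagger]$ and $\Lambda_{\mathcal P}=\sum_{\vec s}\Lambda_{\mathcal P,\vec s}$ (output on $(0_2,N_1)$). The $\mathcal O$-term is as $N\epsilon\to0$. *)

From HB Require Import structures.
From mathcomp Require Import all_boot all_order all_algebra fingroup perm.
From mathcomp Require Import reals.
From mathcomp Require Import complex.
Set Implicit Arguments.
Unset Strict Implicit.
Unset Printing Implicit Defensive.
Import Order.TTheory GRing.Theory Num.Theory.
Local Open Scope ring_scope.

(* Operators on a finite-dimensional Hilbert space with orthonormal basis   *)
(* indexed by a finType T: M x y = <x|M|y>.  Vectors: T -> C.                *)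
Section Ops.
Variable C : numClosedFieldType.

Definition op (T : finType) := T -> T -> C.

Definition mulop (T : finType) (M N : op T) : op T :=
  fun x y => \sum_(z : T) M x z * N z y.

Definition adjop (T : finType) (M : op T) : op T := fun x y => (M y x)^*.

Definition trop (T : finType) (M : op T) : C := \sum_(x : T) M x x.

Definition idop (T : finType) : op T := fun x y => (x == y)%:R.

Definition proj (T : finType) (v : T -> C) : op T := fun x y => v x * (v y)^*.

Definition is_density (T : finType) (rho : op T) : Prop :=
  [/\ forall x y, rho y x = (rho x y)^*,
      forall v : T -> C, 0 <= \sum_(x : T) \sum_(y : T) (v x)^* * rho x y * v y
    & trop rho = 1].

Definition pI : op bool := fun b b' => (b == b')%:R.
Definition pX : op bool := fun b b' => (b != b')%:R.
Definition pZ : op bool := fun b b' => if b == b' then (if b then -1 else 1) else 0.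

(* A = {I, X, Z, XZ}: the pair (m, n) encodes X^m Z^n *)
Definition A := (bool * bool)%type.
Definition pauli (a : A) : op bool :=
  mulop (if a.1 then pX else pI) (if a.2 then pZ else pI).

(* two-qubit basis (a, b) = |a>|b>, first component = first qubit *)
Definition psi00 : (bool * bool)%type -> C :=
  fun ab => (ab.1 == ab.2)%:R / sqrtC 2%:R.

(* |Psi_mn> = (I (x) X^m Z^n) |Psi_00> *)
Definition psi (a : A) : (bool * bool)%type -> C :=
  fun ab => \sum_(c : bool) pauli a ab.2 c * psi00 (ab.1, c).

Definition fid (rho : op (bool * bool)%type) : C :=
  \sum_(x : (bool * bool)%type) \sum_(y : (bool * bool)%type) (psi00 x)^* * rho x y * psi00 y.

Definition werner (rho : op (bool * bool)%type) : op (bool * bool)%type :=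
  fun x y => (4%:R * fid rho - 1) / 3%:R * proj psi00 x y
           + (1 - fid rho) / 3%:R * idop x y.

(* Chain with N = n.+2 links, nodes 0 .. N ('I_n.+3), repeaters 1 .. N-1
   (indexed by j : 'I_n.+1 <-> node j+1).  Link i : 'I_n.+2 (i.e. rho_{i+1})
   sits on qubits (i_2, (i+1)_1); we label them (i, false) = i_2 and
   (i, true) = (i+1)_1. *)
Definition qubit (n : nat) := ('I_n.+2 * bool)%type.
Definition basis (n : nat) := {ffun qubit n -> bool}.

Definition chain_state n (rhos : 'I_n.+2 -> op (bool * bool)%type) : op (basis n) :=
  fun x y => \prod_(i : 'I_n.+2)
     rhos i (x (i, false), x (i, true)) (y (i, false), y (i, true)).

Definition syndrome (n : nat) := {ffun 'I_n.+1 -> A}.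
Definition protocol (n : nat) := syndrome n -> 'I_n.+3 -> A.

(* node of repeater j : 'I_n.+1 is j+1 *)
Definition repnode n (j : 'I_n.+1) : 'I_n.+3 :=
  lift ord0 (widen_ord (leqnSn n.+1) j).
(* qubits k_1, k_2 of repeater node k = j+1 *)
Definition k1 n (j : 'I_n.+1) : qubit n := (widen_ord (leqnSn n.+1) j, true).
Definition k2 n (j : 'I_n.+1) : qubit n := (lift ord0 j, false).
Definition q0 n : qubit n := (ord0, false).
Definition qN n : qubit n := (ord_max, true).
Definition is_end n (q : qubit n) : bool := (q == q0 n) || (q == qN n).

(* Pauli applied to each qubit by the correction C_s: P_0(s) on 0_2,
   P_k(s) on k_1 for k = 1..N, identity on the k_2 *)
Definition corr_pauli n (P : protocol n) (s : syndrome n) (q : qubit n) : A :=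
  if q.2 then P s (lift ord0 q.1)
  else if q.1 == ord0 then P s ord0 else (false, false).

Definition Cmat n (P : protocol n) (s : syndrome n) : op (basis n) :=
  fun x y => \prod_(q : qubit n) pauli (corr_pauli P s q) (x q) (y q).

Definition Pimat n (s : syndrome n) : op (basis n) :=
  fun x y =>
    (\prod_(j : 'I_n.+1)
        proj (psi (s j)) (x (k1 j), x (k2 j)) (y (k1 j), y (k2 j)))
    * \prod_(q : qubit n | is_end q) (x q == y q)%:R.

Definition ptrace_rep n (M : op (basis n)) : op (bool * bool)%type :=
  fun ab ab' => \sum_(x : basis n) \sum_(y : basis n)
    ([&& x (q0 n) == ab.1, x (qN n) == ab.2,
         y (q0 n) == ab'.1, y (qN n) == ab'.2
       & [forall q, ~~ is_end q ==> (x q == y q)]])%:R * M x y.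

Definition Lambda_s n (P : protocol n) (s : syndrome n) (rho : op (basis n))
  : op (bool * bool)%type :=
  ptrace_rep (mulop (Pimat s) (mulop (mulop (Cmat P s) rho) (adjop (Cmat P s)))).

Definition Lambda n (P : protocol n) (rho : op (basis n)) : op (bool * bool)%type :=
  fun ab ab' => \sum_(s : syndrome n) Lambda_s P s rho ab ab'.

Definition swap_and_correct n (P : protocol n) : Prop :=
  (exists alpha : {perm 'I_n.+1},
     forall (k : 'I_n.+1) (s s' : syndrome n),
       (forall j : 'I_n.+1, (j < k)%N -> s (alpha j) = s' (alpha j)) ->
       P s (repnode (alpha k)) = P s' (repnode (alpha k)))
  /\
  (forall s : syndrome n,
     let out := Lambda_s P s (chain_state (fun _ => proj psi00)) in
     (fun ab ab' => (trop out)^-1 * out ab ab') = proj psi00).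

End Ops.

From HB Require Import structures.
From mathcomp Require Import all_boot all_order all_algebra fingroup perm.
From mathcomp Require Import reals complex.
From mathcomp Require Import ring lra.
Set Implicit Arguments.
Unset Strict Implicit.
Unset Printing Implicit Defensive.
Import Order.TTheory GRing.Theory Num.Theory.
Local Open Scope ring_scope.

(* The output fidelity of a swap-and-correct protocol depends on the input
   links only through their Bell-diagonal weights [p_k a = <Psi_a|rho_k|Psi_a>].
   Indeed, each syndrome [s] projects onto a product of Bell vectors; condition
   (A) makes the map from syndromes to the repeater Bell labels after correction
   injective, and condition (B) forces the end label to be the one with the
   X- and Z-parities of the repeater labels.  Hence [F'] is the [Psi_00]
   component of the convolution [p_1 * ... * p_N] over the Klein group
   [{I, X, Z, XZ}], which we compute through its four characters.
   The Werner twirl keeps [p_k ff] and equalises the three error weights, each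
   at most [eps].  Appending link [k + 1] to a chain whose accumulated error
   probability is at most [k eps] therefore changes the difference between the
   two convolutions by at most [k eps^2], so that [|F' - F'_W| <= C(N, 2) eps^2]
   holds exactly: no cubic correction is needed. *)

Local Notation ff := (false, false).
Local Notation ft := (false, true).
Local Notation tf := (true, false).
Local Notation tt := (true, true).

Section BigFacts.
Variable R : comPzSemiRingType.

Lemma natr_and (b1 b2 : bool) : ((b1 && b2)%:R : R) = b1%:R * b2%:R.
Proof. by case: b1; rewrite ?mul1r ?mul0r. Qed.

Lemma sum_mul_eq (T : finType) (F : T -> R) z : \sum_x F x * (x == z)%:R = F z.
Proof.
rewrite (bigD1 z) //= eqxx mulr1 big1 ?addr0 // => x /negbTE ->.
by rewrite mulr0.
Qed.

Lemma prod_natr_forall (T : finType) (P : pred T) (b : pred T) :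
  \prod_(x | P x) ((b x)%:R : R) = [forall x, P x ==> b x]%:R.
Proof.
have [/forallP Hb | /forallPn [x]] := boolP [forall x, P x ==> b x].
  by rewrite big1 // => x Px; move: (Hb x); rewrite Px => /= ->.
rewrite negb_imply => /andP [Px /negbTE bx].
by rewrite (bigD1 x) //= bx mul0r.
Qed.

Lemma natr_eq_ffun (I : finType) (T : eqType) (f g : {ffun I -> T}) :
  ((f == g)%:R : R) = \prod_i (f i == g i)%:R.
Proof.
rewrite prod_natr_forall; congr (nat_of_bool _)%:R.
apply/idP/forallP => [/eqP -> i | fg]; first by rewrite /= eqxx.
by apply/eqP/ffunP => i; exact/eqP/fg.
Qed.

Lemma exchange_big3 (I1 I2 I3 : finType) (F : I1 -> I2 -> I3 -> R) :
  \sum_a \sum_b \sum_c F a b c = \sum_c \sum_b \sum_a F a b c.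
Proof.
under eq_bigr do rewrite exchange_big.
by rewrite exchange_big; apply: eq_bigr => c _; rewrite exchange_big.
Qed.

Lemma exchange_big22 (I1 I2 I3 I4 : finType) (F : I1 -> I2 -> I3 -> I4 -> R) :
  \sum_a \sum_b \sum_c \sum_d F a b c d = \sum_c \sum_d \sum_a \sum_b F a b c d.
Proof.
under eq_bigr do rewrite exchange_big3.
by rewrite exchange_big3; apply: eq_bigr => c _; rewrite exchange_big.
Qed.

End BigFacts.

Lemma natr2_neq0 (R : numDomainType) : (2%:R : R) != 0.
Proof. by rewrite pnatr_eq0. Qed.

Lemma sign_eq1 (R : idomainType) (a b : R) : a * a = 1 -> (1 + a) * b != 0 -> a = 1.
Proof.
move=> aa ab; have e : (1 + a) * (1 - a) = 1 - a * a by ring.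
have : (1 + a) * (1 - a) == 0 by rewrite e aa subrr.
rewrite mulf_eq0 => /orP [/eqP a1 | ]; first by move: ab; rewrite a1 mul0r eqxx.
by rewrite subr_eq0 => /eqP <-.
Qed.

Section BellBasis.
Variable C : numClosedFieldType.

Definition invsqrt2 : C := (sqrtC 2%:R)^-1.

Lemma conj_invsqrt2 : invsqrt2^* = invsqrt2.
Proof. by apply: geC0_conj; rewrite invr_ge0 sqrtC_ge0 ler0n. Qed.

Lemma invsqrt2_sq : invsqrt2 * invsqrt2 = 2%:R^-1.
Proof. by rewrite /invsqrt2 -invfM -expr2 sqrtCK. Qed.

Lemma sum_bool2 (F : bool * bool -> C) :
  \sum_x F x = F ff + F ft + F tf + F tt.
Proof.
have -> : \sum_x F x = \sum_a \sum_b F (a, b).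
  by rewrite pair_bigA; apply: eq_bigr => -[].
by rewrite !big_bool /=; ring.
Qed.

Lemma pauliE a z u : pauli C a z u = (z (+) a.1 == u)%:R * (-1) ^+ (a.2 && u).
Proof.
rewrite /pauli /mulop big_bool.
by case: a => [[] []]; case: z; case: u; rewrite /pX /pI /pZ /=; ring.
Qed.

Lemma conj_pauli a z u : (pauli C a z u)^* = pauli C a z u.
Proof. by rewrite pauliE rmorphM /= conjC_nat rmorph_sign. Qed.

(* Bell vectors without the normalisation 1/sqrt 2. *)
Definition ubell (a : A) (u : bool * bool) : C :=
  (u.1 == u.2 (+) a.1)%:R * (-1) ^+ (a.2 && u.1).

Lemma psiE a u : psi C a u = ubell a u * invsqrt2.
Proof.
rewrite /psi big_bool !pauliE /psi00 /ubell -/invsqrt2.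
by case: a => [[] []]; case: u => [[] []]; rewrite /=; ring.
Qed.

Lemma psi_ff u : psi C ff u = psi00 C u.
Proof. by rewrite psiE /ubell /psi00 addbF expr0 mulr1. Qed.

Lemma conj_psi a u : (psi C a u)^* = psi C a u.
Proof. by rewrite psiE /ubell !rmorphM /= conjC_nat rmorph_sign conj_invsqrt2. Qed.

Lemma conj_psi00 u : (psi00 C u)^* = psi00 C u.
Proof. by rewrite -psi_ff conj_psi. Qed.

Lemma bell_complete u v : \sum_a (psi C a u)^* * psi C a v = (u == v)%:R.
Proof.
under eq_bigr do rewrite conj_psi !psiE mulrACA invsqrt2_sq.
have := natr2_neq0 C; rewrite sum_bool2 /ubell.
by case: u => [[] []]; case: v => [[] []] => /= ?; field.
Qed.

Definition xorA (a b : A) : A := (a.1 (+) b.1, a.2 (+) b.2).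

Lemma xorAK b : cancel (xorA^~ b) (xorA^~ b).
Proof. by case: b => b1 b2 [a1 a2]; rewrite /xorA /= -!addbA !addbb !addbF. Qed.

(* The phase picked up when the Paulis [a1], [a2] act on the two qubits of
   the Bell vector [c]. *)
Definition pauli_phase (c a1 a2 : A) : C :=
  (-1) ^+ (c.2 && a1.1) * (-1) ^+ (a2.2 && (c.1 (+) a1.1 (+) a2.1)).

Lemma pauli_phase_psi c a1 a2 u1 u2 :
  (-1) ^+ (a1.2 && u1) * (-1) ^+ (a2.2 && u2) * psi C c (u1 (+) a1.1, u2 (+) a2.1)
  = pauli_phase c a1 a2 * psi C (xorA (xorA c a1) a2) (u1, u2).
Proof.
rewrite !psiE /pauli_phase /xorA /ubell.
by case: c => [[] []]; case: a1 => [[] []]; case: a2 => [[] []]; case: u1; case: u2;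
  rewrite /=; ring.
Qed.

Lemma pauli_phase_normr c a1 a2 : (pauli_phase c a1 a2)^* * pauli_phase c a1 a2 = 1.
Proof.
by rewrite /pauli_phase rmorphM /= !rmorph_sign mulrACA -!expr2 !sqrr_sign mulr1.
Qed.

Lemma psi_negb c u1 u2 : psi C c (~~ u1, ~~ u2) = (-1) ^+ c.2 * psi C c (u1, u2).
Proof. by rewrite !psiE /ubell; case: c => [[] []]; case: u1; case: u2; rewrite /=; ring. Qed.

Lemma psi_sign c (u1 u2 : bool) :
  (-1) ^+ u1 * (-1) ^+ u2 * psi C c (u1, u2) = (-1) ^+ c.1 * psi C c (u1, u2).
Proof. by rewrite !psiE /ubell; case: c => [[] []]; case: u1; case: u2; rewrite /=; ring. Qed.

End BellBasis.

Section BellWeights.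
Variable C : numClosedFieldType.
Local Notation op2 := (op C (bool * bool)%type).

Definition expect (T : finType) (rho : op C T) (v : T -> C) : C :=
  \sum_x \sum_y (v x)^* * rho x y * v y.

Definition bell_weight (rho : op2) (a : A) : C := expect rho (psi C a).

(* Expectations of the correlators [I (x) I], [X (x) X], [Z (x) Z] and
   [ZX (x) ZX]. *)
Definition trII (rho : op2) : C := \sum_u rho u u.
Definition trXX (rho : op2) : C := \sum_u rho (~~ u.1, ~~ u.2) u.
Definition trZZ (rho : op2) : C :=
  \sum_(u : bool * bool) (-1) ^+ u.1 * (-1) ^+ u.2 * rho u u.
Definition trZXZX (rho : op2) : C :=
  \sum_(u : bool * bool) (-1) ^+ u.1 * (-1) ^+ u.2 * rho (~~ u.1, ~~ u.2) u.

Lemma bell_weightE rho a : bell_weight rho a =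
  2%:R^-1 * \sum_x \sum_y ubell C a x * rho x y * ubell C a y.
Proof.
rewrite -invsqrt2_sq /bell_weight /expect mulr_sumr; apply: eq_bigr => x _.
rewrite mulr_sumr; apply: eq_bigr => y _.
by rewrite conj_psi !psiE; ring.
Qed.

Ltac expand_bell_weights := have := natr2_neq0 C;
  rewrite /trII /trXX /trZZ /trZXZX !bell_weightE !sum_bool2 /ubell /=;
  rewrite ?sum_bool2 /= => ?; field.

Lemma trII_bell rho : trII rho =
  bell_weight rho ff + bell_weight rho ft + bell_weight rho tf + bell_weight rho tt.
Proof. by expand_bell_weights. Qed.

Lemma trXX_bell rho : trXX rho =
  bell_weight rho ff - bell_weight rho ft + bell_weight rho tf - bell_weight rho tt.
Proof. by expand_bell_weights. Qed.

Lemma trZZ_bell rho : trZZ rho =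
  bell_weight rho ff + bell_weight rho ft - bell_weight rho tf - bell_weight rho tt.
Proof. by expand_bell_weights. Qed.

Lemma trZXZX_bell rho : trZXZX rho =
  bell_weight rho ff - bell_weight rho ft - bell_weight rho tf + bell_weight rho tt.
Proof. by expand_bell_weights. Qed.

Lemma fid_bell_weight rho : fid rho = bell_weight rho ff.
Proof.
by apply: eq_bigr => x _; apply: eq_bigr => y _; rewrite !psi_ff.
Qed.

Lemma bell_weight_lin (alpha beta : C) (M N : op2) a :
  bell_weight (fun x y => alpha * M x y + beta * N x y) a
  = alpha * bell_weight M a + beta * bell_weight N a.
Proof.
rewrite /bell_weight /expect !mulr_sumr -big_split /=; apply: eq_bigr => x _.
by rewrite !mulr_sumr -big_split /=; apply: eq_bigr => y _; ring.
Qed.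

Lemma bell_weight_proj00 a : bell_weight (proj (psi00 C)) a = (a == ff)%:R.
Proof.
have -> : bell_weight (proj (psi00 C)) a = (invsqrt2 C * invsqrt2 C) ^+ 2 *
    \sum_x \sum_y ubell C a x * (ubell C ff x * ubell C ff y) * ubell C a y.
  rewrite /bell_weight /expect mulr_sumr; apply: eq_bigr => x _.
  rewrite mulr_sumr; apply: eq_bigr => y _.
  by rewrite /proj conj_psi conj_psi00 -!psi_ff !psiE; ring.
have := natr2_neq0 C; rewrite invsqrt2_sq !sum_bool2 /ubell.
by case: a => [[] []] /= ?; field.
Qed.

Lemma bell_weight_idop a : bell_weight (@idop C _) a = 1.
Proof.
have := natr2_neq0 C; rewrite bell_weightE !sum_bool2 /ubell /idop.
by case: a => [[] []] /= ?; field.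
Qed.

Lemma bell_weight_werner rho a :
  bell_weight (werner rho) a = if a == ff then fid rho else (1 - fid rho) / 3%:R.
Proof.
have n3 : (3%:R : C) != 0 by rewrite pnatr_eq0.
have -> : bell_weight (werner rho) a =
    (4%:R * fid rho - 1) / 3%:R * bell_weight (proj (psi00 C)) a
    + (1 - fid rho) / 3%:R * bell_weight (@idop C _) a.
  exact: bell_weight_lin.
rewrite bell_weight_proj00 bell_weight_idop.
by case: a => [[] []] /=; field.
Qed.

End BellWeights.

Section ChainBellBasis.
Variable C : numClosedFieldType.
Variable n : nat.
Implicit Types (c : A) (x y : basis n) (t : syndrome n).

Lemma prod_qubit (f : qubit n -> C) :
  \prod_q f q = f (q0 n) * f (qN n) * \prod_(j < n.+1) (f (k1 j) * f (k2 j)).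
Proof.
have -> : \prod_q f q = \prod_i \prod_b f (i, b).
  by rewrite pair_bigA; apply: eq_bigr => -[].
under eq_bigr do rewrite big_bool /=.
rewrite big_split /= [X in X * _]big_ord_recr [X in _ * X]big_ord_recl /= big_split /=.
by rewrite /q0 /qN /k1 /k2; ring.
Qed.

(* The end qubits in the Bell state [c], repeater node [j + 1] in [t j]. *)
Definition chain_bell (c : A) t x : C :=
  psi C c (x (q0 n), x (qN n)) * \prod_j psi C (t j) (x (k1 j), x (k2 j)).

Definition flip x : basis n := [ffun q => ~~ x q].
Definition parity x : C := \prod_q (-1) ^+ x q.
Definition signX t : C := \prod_j (-1) ^+ (t j).2.
Definition signZ t : C := \prod_j (-1) ^+ (t j).1.

Lemma chain_bell_flip c t x :
  chain_bell c t (flip x) = (-1) ^+ c.2 * signX t * chain_bell c t x.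
Proof.
rewrite /chain_bell /flip /signX !ffunE psi_negb.
under eq_bigr do rewrite !ffunE psi_negb.
by rewrite big_split /=; ring.
Qed.

Lemma chain_bell_parity c t x :
  parity x * chain_bell c t x = (-1) ^+ c.1 * signZ t * chain_bell c t x.
Proof.
rewrite /parity prod_qubit /chain_bell /signZ.
transitivity (((-1) ^+ x (q0 n) * (-1) ^+ x (qN n) * psi C c (x (q0 n), x (qN n))) *
  \prod_j ((-1) ^+ x (k1 j) * (-1) ^+ x (k2 j) * psi C (t j) (x (k1 j), x (k2 j)))).
  by rewrite [in RHS]big_split /=; ring.
rewrite psi_sign; under eq_bigr do rewrite psi_sign.
by rewrite big_split /=; ring.
Qed.

Lemma chain_bell_complete x y :
  \sum_c \sum_t (chain_bell c t x)^* * chain_bell c t y = (x == y)%:R.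
Proof.
transitivity ((\sum_c (psi C c (x (q0 n), x (qN n)))^* * psi C c (y (q0 n), y (qN n))) *
  \prod_j \sum_a (psi C a (x (k1 j), x (k2 j)))^* * psi C a (y (k1 j), y (k2 j))).
  rewrite bigA_distr_bigA big_distrl /=; apply: eq_bigr => c _.
  rewrite mulr_sumr; apply: eq_bigr => t _.
  by rewrite /chain_bell rmorphM rmorph_prod /= big_split /=; ring.
rewrite bell_complete; under eq_bigr do rewrite bell_complete.
rewrite natr_eq_ffun prod_qubit xpair_eqE natr_and.
by under eq_bigr do rewrite xpair_eqE natr_and.
Qed.

End ChainBellBasis.

Section SwapFidelity.
Variable C : numClosedFieldType.
Variable n : nat.
Implicit Types (c : A) (x y : basis n) (t : syndrome n) (rho : op C (basis n)).

(* [1] if the end label [c] has the X- and Z-parities of the repeater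
   labels [t], and [0] otherwise. *)
Definition stab_weight (c : A) t : C :=
  (1 + (-1) ^+ c.2 * signX C t) * (1 + (-1) ^+ c.1 * signZ C t) / 4%:R.

Definition swap_fid rho : C :=
  \sum_t \sum_c stab_weight c t * expect rho (chain_bell C c t).

Lemma chain_bell_stabilizers c t y :
  (1 + (-1) ^+ c.2 * signX C t) * (1 + (-1) ^+ c.1 * signZ C t) * chain_bell C c t y =
  chain_bell C c t y + chain_bell C c t (flip y)
  + parity C y * chain_bell C c t y + parity C y * chain_bell C c t (flip y).
Proof.
by rewrite chain_bell_parity chain_bell_flip (mulrCA (parity C y)) chain_bell_parity; ring.
Qed.

Lemma stab_weight_outer x y :
  \sum_c \sum_t stab_weight c t * ((chain_bell C c t x)^* * chain_bell C c t y) =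
  ((x == y)%:R + (x == flip y)%:R + parity C y * (x == y)%:R
   + parity C y * (x == flip y)%:R) / 4%:R.
Proof.
rewrite -!chain_bell_complete !mulr_sumr -!big_split mulr_suml /=; apply: eq_bigr => c _.
rewrite !mulr_sumr -!big_split mulr_suml /=; apply: eq_bigr => t _.
transitivity ((chain_bell C c t x)^* * ((1 + (-1) ^+ c.2 * signX C t) *
   (1 + (-1) ^+ c.1 * signZ C t) * chain_bell C c t y) / 4%:R).
  by rewrite /stab_weight; ring.
by rewrite chain_bell_stabilizers; ring.
Qed.

(* The right-hand side is [Tr (rho Q)] for the projector
   [Q = (1 + X..X + Z..Z + ZX..ZX) / 4] onto the joint +1 eigenspace of the
   stabilizers of the chain. *)
Lemma swap_fid_stabilizers rho : swap_fid rho =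
  \sum_y (rho y y + rho (flip y) y + parity C y * rho y y
          + parity C y * rho (flip y) y) / 4%:R.
Proof.
have expand c t : stab_weight c t * expect rho (chain_bell C c t) =
    \sum_x \sum_y rho x y * (stab_weight c t *
                             ((chain_bell C c t x)^* * chain_bell C c t y)).
  rewrite /expect mulr_sumr; apply: eq_bigr => x _.
  by rewrite mulr_sumr; apply: eq_bigr => y _; ring.
rewrite /swap_fid exchange_big /=.
under eq_bigr do under eq_bigr do rewrite expand.
rewrite exchange_big22 exchange_big /=; apply: eq_bigr => y _.
have outer x : \sum_c \sum_t rho x y * (stab_weight c t *
      ((chain_bell C c t x)^* * chain_bell C c t y)) =
    rho x y * (((x == y)%:R + (x == flip y)%:R + parity C y * (x == y)%:R
                + parity C y * (x == flip y)%:R) / 4%:R).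
  by rewrite -stab_weight_outer mulr_sumr; apply: eq_bigr => c _; rewrite mulr_sumr.
under eq_bigr do rewrite outer.
transitivity ((\sum_x (rho x y * (x == y)%:R + rho x y * (x == flip y)%:R
    + (rho x y * parity C y) * (x == y)%:R
    + (rho x y * parity C y) * (x == flip y)%:R)) / 4%:R).
  by rewrite mulr_suml; apply: eq_bigr => x _; ring.
by rewrite !big_split /= !sum_mul_eq; ring.
Qed.

Lemma sum_chain_basis (f : 'I_n.+2 -> bool * bool -> C) :
  \sum_(y : basis n) \prod_k f k (y (k, false), y (k, true)) = \prod_k \sum_u f k u.
Proof.
rewrite bigA_distr_bigA /=.
pose links (y : basis n) : {ffun 'I_n.+2 -> bool * bool} :=
  [ffun k => (y (k, false), y (k, true))].
pose qubits (g : {ffun 'I_n.+2 -> bool * bool}) : basis n :=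
  [ffun q : qubit n => if q.2 then (g q.1).2 else (g q.1).1].
have linksK : cancel links qubits by move=> y; apply/ffunP => -[i []]; rewrite !ffunE.
have qubitsK : cancel qubits links.
  by move=> g; apply/ffunP => k; rewrite !ffunE /=; case: (g k).
rewrite (reindex links) /=; last by exists qubits => ? _.
by apply: eq_bigr => y _; apply: eq_bigr => k _; rewrite ffunE.
Qed.

Lemma parity_links y :
  parity C y = \prod_k ((-1) ^+ y (k, false) * (-1) ^+ y (k, true)).
Proof.
have -> : parity C y = \prod_k \prod_b (-1) ^+ y (k, b).
  by rewrite pair_bigA; apply: eq_bigr => -[].
by apply: eq_bigr => k _; rewrite big_bool mulrC.
Qed.

Lemma swap_fid_chain_state (rhos : 'I_n.+2 -> op C (bool * bool)%type) :
  swap_fid (chain_state rhos) = (\prod_k trII (rhos k) + \prod_k trXX (rhos k)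
    + \prod_k trZZ (rhos k) + \prod_k trZXZX (rhos k)) / 4%:R.
Proof.
rewrite swap_fid_stabilizers -mulr_suml !big_split /=; congr (_ / _).
congr (_ + _ + _ + _); rewrite /chain_state -sum_chain_basis; apply: eq_bigr => y _.
- by apply: eq_bigr.
- by apply: eq_bigr => k _; rewrite /flip !ffunE.
- by rewrite parity_links -big_split; apply: eq_bigr.
- by rewrite parity_links -big_split; apply: eq_bigr => k _; rewrite /flip !ffunE.
Qed.

End SwapFidelity.

Section PartialTrace.
Variable C : numClosedFieldType.
Variable n : nat.
Implicit Types (x y z : basis n) (s : syndrome n).

Lemma is_end_q0 : is_end (q0 n). Proof. by rewrite /is_end eqxx. Qed.
Lemma is_end_qN : is_end (qN n). Proof. by rewrite /is_end eqxx orbT. Qed.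

Lemma is_end_k1 (j : 'I_n.+1) : is_end (k1 j) = false.
Proof.
rewrite /is_end /k1 /q0 /qN !xpair_eqE /= andbF andbT /=.
by apply/negP => /eqP /(congr1 val) /= jn; move: (ltn_ord j); rewrite jn ltnn.
Qed.

Lemma is_end_k2 (j : 'I_n.+1) : is_end (k2 j) = false.
Proof. by rewrite /is_end /k2 /q0 /qN !xpair_eqE /= ?andbF ?andbT ?orbF. Qed.

Definition agree_off_ends x y := [forall q, ~~ is_end q ==> (x q == y q)].

Definition splice z y : basis n := [ffun q => if is_end q then z q else y q].

Lemma splice_eq x y z :
  [forall q, is_end q ==> (x q == z q)] && agree_off_ends x y = (x == splice z y).
Proof.
rewrite /agree_off_ends; apply/idP/eqP => [/andP [/forallP xz /forallP xy] | ->].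
  apply/ffunP => q; rewrite ffunE; move: (xz q) (xy q).
  by case: (is_end q) => /= [/eqP -> _ | _ /eqP ->].
by apply/andP; split; apply/forallP => q; rewrite ffunE; case: (is_end q); rewrite /= ?eqxx.
Qed.

Lemma fid_ptrace_rep (M : op C (basis n)) : fid (ptrace_rep M) =
  \sum_(x : basis n) \sum_(y : basis n) (psi00 C (x (q0 n), x (qN n)))^*
    * (agree_off_ends x y)%:R * M x y * psi00 C (y (q0 n), y (qN n)).
Proof.
have split_cond x y (u u' : bool * bool) :
    ([&& x (q0 n) == u.1, x (qN n) == u.2, y (q0 n) == u'.1, y (qN n) == u'.2
       & agree_off_ends x y]%:R : C)
    = (agree_off_ends x y)%:R * (u' == (y (q0 n), y (qN n)))%:R
      * (u == (x (q0 n), x (qN n)))%:R.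
  case: u u' => [a b] [a' b']; rewrite !natr_and /=.
  by rewrite (eq_sym a) (eq_sym b) (eq_sym a') (eq_sym b'); ring.
rewrite /fid /ptrace_rep.
transitivity (\sum_u \sum_u' \sum_(x : basis n) \sum_(y : basis n) (psi00 C u)^* *
  ([&& x (q0 n) == u.1, x (qN n) == u.2, y (q0 n) == u'.1, y (qN n) == u'.2
     & agree_off_ends x y]%:R * M x y) * psi00 C u').
  apply: eq_bigr => u _; apply: eq_bigr => u' _.
  rewrite mulr_sumr mulr_suml; apply: eq_bigr => x _.
  by rewrite mulr_sumr mulr_suml.
rewrite exchange_big22; apply: eq_bigr => x _; apply: eq_bigr => y _.
under eq_bigr do under eq_bigr do rewrite split_cond.
transitivity (\sum_u (\sum_u' ((psi00 C u)^* * (agree_off_ends x y)%:R * M x y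
   * psi00 C u') * (u' == (y (q0 n), y (qN n)))%:R) * (u == (x (q0 n), x (qN n)))%:R).
  by apply: eq_bigr => u _; rewrite mulr_suml; apply: eq_bigr => u' _; ring.
by under eq_bigr do rewrite sum_mul_eq; rewrite sum_mul_eq.
Qed.

Lemma Pimat_splice s x y z :
  (psi00 C (x (q0 n), x (qN n)))^* * (agree_off_ends x y)%:R * Pimat C s x z
  * psi00 C (y (q0 n), y (qN n))
  = ((chain_bell C ff s z)^* * chain_bell C ff s y) * (x == splice z y)%:R.
Proof.
rewrite /Pimat prod_natr_forall.
transitivity ((psi00 C (x (q0 n), x (qN n)))^*
  * (\prod_j proj (psi C (s j)) (x (k1 j), x (k2 j)) (z (k1 j), z (k2 j)))
  * psi00 C (y (q0 n), y (qN n))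
  * ([forall q, is_end q ==> (x q == z q)] && agree_off_ends x y)%:R).
  by rewrite natr_and; ring.
rewrite splice_eq; have [-> | _] := eqVneq x (splice z y); last by rewrite !mulr0.
rewrite /splice !ffunE is_end_q0 is_end_qN.
under eq_bigr do rewrite /proj !ffunE is_end_k1 is_end_k2.
by rewrite /chain_bell !psi_ff (rmorphM _ (psi00 C _)) rmorph_prod big_split /=; ring.
Qed.

Lemma fid_ptrace_Pimat s (M : op C (basis n)) :
  fid (ptrace_rep (mulop (Pimat C s) M)) = expect M (chain_bell C ff s).
Proof.
rewrite fid_ptrace_rep /expect /mulop.
transitivity (\sum_(x : basis n) \sum_(y : basis n) \sum_(z : basis n)
  (psi00 C (x (q0 n), x (qN n)))^* * (agree_off_ends x y)%:R * Pimat C s x z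
  * psi00 C (y (q0 n), y (qN n)) * M z y).
  apply: eq_bigr => x _; apply: eq_bigr => y _.
  by rewrite mulr_sumr mulr_suml; apply: eq_bigr => z _; ring.
rewrite exchange_big3; apply: eq_bigr => z _; apply: eq_bigr => y _.
under eq_bigr do rewrite Pimat_splice mulrAC.
by rewrite sum_mul_eq; ring.
Qed.

End PartialTrace.

Section ExpectFacts.
Variable C : numClosedFieldType.
Variable T : finType.
Implicit Types (rho M : op C T) (v w : T -> C).

Lemma eq_expect rho v w : v =1 w -> expect rho v = expect rho w.
Proof. by move=> vw; apply: eq_bigr => x _; apply: eq_bigr => y _; rewrite !vw. Qed.

Lemma expectZ rho (k : C) v : expect rho (fun u => k * v u) = k^* * k * expect rho v.
Proof.
rewrite /expect mulr_sumr; apply: eq_bigr => x _; rewrite mulr_sumr.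
by apply: eq_bigr => y _; rewrite rmorphM; ring.
Qed.

Lemma expect_conj M rho v :
  expect (mulop (mulop M rho) (adjop M)) v = expect rho (fun u => \sum_y (M y u)^* * v y).
Proof.
transitivity (\sum_z \sum_y \sum_u \sum_w (v z)^* * M z u * rho u w * (M y w)^* * v y).
  rewrite /expect /mulop /adjop; apply: eq_bigr => z _; apply: eq_bigr => y _.
  rewrite mulr_sumr mulr_suml.
  under eq_bigr do rewrite mulr_suml mulr_sumr mulr_suml.
  by rewrite exchange_big /=; apply: eq_bigr => u _; apply: eq_bigr => w _; ring.
rewrite /expect -exchange_big22; apply: eq_bigr => u _; apply: eq_bigr => w _.
rewrite rmorph_sum /= !mulr_suml; apply: eq_bigr => z _.
by rewrite mulr_sumr; apply: eq_bigr => y _; rewrite rmorphM /= conjCK; ring.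
Qed.

End ExpectFacts.

Section Correction.
Variable C : numClosedFieldType.
Variable n : nat.
Implicit Types (rho : op C (basis n)) (P : protocol n) (s : syndrome n) (u : basis n).

Lemma fid_Lambda_sum P rho : fid (Lambda P rho) = \sum_s fid (Lambda_s P s rho).
Proof.
rewrite /fid /Lambda.
transitivity (\sum_x \sum_y \sum_s (psi00 C x)^* * Lambda_s P s rho x y * psi00 C y).
  by apply: eq_bigr => x _; apply: eq_bigr => y _; rewrite mulr_sumr mulr_suml.
by under eq_bigr do rewrite exchange_big; rewrite exchange_big.
Qed.

Definition corr_shift P s u : basis n := [ffun q => u q (+) (corr_pauli P s q).1].

Lemma conj_Cmat P s y u : (Cmat C P s y u)^* =
  (\prod_q (-1) ^+ ((corr_pauli P s q).2 && u q)) * (y == corr_shift P s u)%:R.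
Proof.
rewrite /Cmat rmorph_prod /=; under eq_bigr do rewrite conj_pauli pauliE.
rewrite big_split /= natr_eq_ffun mulrC; congr (_ * _); apply: eq_bigr => q _.
by rewrite /corr_shift ffunE; case: (y q); case: (u q); case: (corr_pauli P s q).1.
Qed.

(* [C_s^dagger] maps the product Bell vector with end label [ff] and repeater
   labels [s] to the one with labels [end_label P s] and [rep_labels P s]. *)
Definition end_label P s : A :=
  xorA (xorA ff (corr_pauli P s (q0 n))) (corr_pauli P s (qN n)).

Definition rep_labels P s : syndrome n :=
  [ffun j => xorA (xorA (s j) (corr_pauli P s (k1 j))) (corr_pauli P s (k2 j))].

Definition corr_phase P s : C :=
  pauli_phase C ff (corr_pauli P s (q0 n)) (corr_pauli P s (qN n)) *
  \prod_j pauli_phase C (s j) (corr_pauli P s (k1 j)) (corr_pauli P s (k2 j)).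

Lemma corr_phase_normr P s : (corr_phase P s)^* * corr_phase P s = 1.
Proof.
rewrite /corr_phase rmorphM rmorph_prod mulrACA pauli_phase_normr mul1r -big_split /=.
by rewrite big1 // => j _; rewrite pauli_phase_normr.
Qed.

Lemma Cmat_adj_chain_bell P s u :
  \sum_y (Cmat C P s y u)^* * chain_bell C ff s y
  = corr_phase P s * chain_bell C (end_label P s) (rep_labels P s) u.
Proof.
set a := corr_pauli P s; set sg := fun q => (-1) ^+ ((a q).2 && u q) : C.
have pair_step c q q' : sg q * sg q' * psi C c (corr_shift P s u q, corr_shift P s u q')
    = pauli_phase C c (a q) (a q') * psi C (xorA (xorA c (a q)) (a q')) (u q, u q').
  by rewrite /corr_shift !ffunE pauli_phase_psi.
transitivity ((\prod_q sg q) * chain_bell C ff s (corr_shift P s u)).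
  rewrite -(sum_mul_eq (fun y => _ * chain_bell C ff s y) (corr_shift P s u)).
  by apply: eq_bigr => y _; rewrite conj_Cmat; ring.
transitivity ((sg (q0 n) * sg (qN n) *
    psi C ff (corr_shift P s u (q0 n), corr_shift P s u (qN n))) *
  \prod_j (sg (k1 j) * sg (k2 j) *
    psi C (s j) (corr_shift P s u (k1 j), corr_shift P s u (k2 j)))).
  by rewrite prod_qubit /chain_bell [in RHS]big_split /=; ring.
rewrite pair_step; under eq_bigr do rewrite pair_step.
rewrite /corr_phase /chain_bell /end_label big_split /=.
under [X in _ = _ * (_ * X)]eq_bigr do rewrite ffunE.
by ring.
Qed.

Lemma fid_Lambda_s_chain_bell P s rho :
  fid (Lambda_s P s rho) = expect rho (chain_bell C (end_label P s) (rep_labels P s)).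
Proof.
rewrite /Lambda_s fid_ptrace_Pimat expect_conj.
rewrite (eq_expect _ (Cmat_adj_chain_bell P s)).
by rewrite expectZ corr_phase_normr mul1r.
Qed.

End Correction.

Section PerfectChain.
Variable C : numClosedFieldType.
Variable n : nat.
Implicit Types (c : A) (x y : basis n) (t : syndrome n) (v : basis n -> C).

Definition perfect_chain : op C (basis n) := chain_state (fun _ => proj (psi00 C)).

Definition bell00_chain x : C := \prod_k psi00 C (x (k, false), x (k, true)).

Definition overlap v : C := \sum_y (bell00_chain y)^* * v y.

Lemma perfect_chainE x y : perfect_chain x y = bell00_chain x * (bell00_chain y)^*.
Proof. by rewrite /perfect_chain /chain_state /proj big_split /= rmorph_prod. Qed.

Lemma expect_perfect_chain v : expect perfect_chain v = (overlap v)^* * overlap v.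
Proof.
rewrite /expect /overlap rmorph_sum /= mulr_suml; apply: eq_bigr => x _.
rewrite mulr_sumr; apply: eq_bigr => y _.
by rewrite perfect_chainE (rmorphM _ (bell00_chain x)^*) /= conjCK; ring.
Qed.

Lemma flip_inj : injective (@flip n).
Proof.
by move=> x y /ffunP xy; apply/ffunP => q; move: (xy q); rewrite !ffunE => /negb_inj.
Qed.

Lemma bell00_chain_flip x : bell00_chain (flip x) = bell00_chain x.
Proof.
apply: eq_bigr => k _; rewrite /flip !ffunE -!psi_ff psi_negb /=.
by rewrite expr0 mul1r.
Qed.

Lemma parity_bell00_chain x : parity C x * bell00_chain x = bell00_chain x.
Proof.
rewrite parity_links /bell00_chain -big_split /=; apply: eq_bigr => k _.
by rewrite -!psi_ff psi_sign /= expr0 mul1r.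
Qed.

Lemma conj_parity x : (parity C x)^* = parity C x.
Proof. by rewrite /parity rmorph_prod; apply: eq_bigr => q _; rewrite rmorph_sign. Qed.

(* The perfect chain is fixed by the stabilizers [X..X] and [Z..Z]. *)
Lemma stab_weight_overlap c t :
  stab_weight C c t * overlap (chain_bell C c t) = overlap (chain_bell C c t).
Proof.
set o := overlap _.
have fixX : (-1) ^+ c.2 * signX C t * o = o.
  rewrite /o /overlap mulr_sumr [in RHS](reindex_inj flip_inj) /=.
  by apply: eq_bigr => y _; rewrite bell00_chain_flip chain_bell_flip; ring.
have fixZ : (-1) ^+ c.1 * signZ C t * o = o.
  rewrite /o /overlap mulr_sumr; apply: eq_bigr => y _.
  rewrite -[in RHS](parity_bell00_chain y) rmorphM /= conj_parity.
  transitivity ((bell00_chain y)^* * (parity C y * chain_bell C c t y)); last by ring.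
  by rewrite chain_bell_parity; ring.
have n4 : (4%:R : C) != 0 by rewrite pnatr_eq0.
rewrite /stab_weight.
transitivity ((o + (-1) ^+ c.2 * signX C t * o + (-1) ^+ c.1 * signZ C t * o
  + (-1) ^+ c.2 * signX C t * ((-1) ^+ c.1 * signZ C t * o)) / 4%:R); first by ring.
by rewrite fixZ !fixX; field.
Qed.

Lemma signX_sq t : signX C t * signX C t = 1.
Proof. by rewrite /signX /signZ -big_split big1 // => j _ /=; rewrite -expr2 sqrr_sign. Qed.

Lemma signZ_sq t : signZ C t * signZ C t = 1.
Proof. by rewrite /signX /signZ -big_split big1 // => j _ /=; rewrite -expr2 sqrr_sign. Qed.

Lemma stab_weight_eq c t :
  stab_weight C c t != 0 -> forall c', stab_weight C c' t = (c' == c)%:R.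
Proof.
move=> w_neq0 c'; have n4 : (4%:R : C) != 0 by rewrite pnatr_eq0.
have sq_sign (b : bool) s : s * s = 1 -> (-1) ^+ b * s * ((-1) ^+ b * s) = 1 :> C.
  by move=> ss; rewrite mulrACA -expr2 sqrr_sign mul1r.
have eX : (-1) ^+ c.2 * signX C t = 1.
  apply: (sign_eq1 (b := (1 + (-1) ^+ c.1 * signZ C t) / 4%:R) (sq_sign _ _ (signX_sq t))).
  by rewrite mulrA.
have eZ : (-1) ^+ c.1 * signZ C t = 1.
  apply: (sign_eq1 (b := (1 + (-1) ^+ c.2 * signX C t) / 4%:R) (sq_sign _ _ (signZ_sq t))).
  by rewrite mulrA (mulrC (1 + _)).
have signXE : signX C t = (-1) ^+ c.2 by rewrite -(signrMK c.2 (signX C t)) eX mulr1.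
have signZE : signZ C t = (-1) ^+ c.1 by rewrite -(signrMK c.1 (signZ C t)) eZ mulr1.
rewrite /stab_weight signXE signZE.
by case: c {w_neq0 eX eZ signXE signZE} => [[] []]; case: c' => [[] []] /=; field.
Qed.

End PerfectChain.

Section SwapAndCorrect.
Variable C : numClosedFieldType.
Variable n : nat.
Implicit Types (rho : op C (basis n)) (P : protocol n) (s : syndrome n).

Lemma fidZ (k : C) (M : op C (bool * bool)%type) : fid (fun x y => k * M x y) = k * fid M.
Proof.
rewrite /fid mulr_sumr; apply: eq_bigr => x _; rewrite mulr_sumr.
by apply: eq_bigr => y _; ring.
Qed.

(* Condition (B) forces a nonzero output fidelity on the perfect chain, which
   by [stab_weight_overlap] rules out a vanishing stabilizer weight. *)
Lemma stab_weight_end_label P s :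
  (let out := Lambda_s P s (chain_state (fun _ => proj (psi00 C))) in
   (fun ab ab' => (trop out)^-1 * out ab ab') = proj (psi00 C)) ->
  stab_weight C (end_label P s) (rep_labels P s) != 0.
Proof.
move=> /= normalized.
have fid_neq0 : fid (Lambda_s P s (chain_state (fun _ => proj (psi00 C)))) != 0.
  apply/eqP => fid0; move: (congr1 (@fid C) normalized).
  by rewrite fidZ fid0 mulr0 fid_bell_weight bell_weight_proj00 => /eqP; rewrite eq_sym oner_eq0.
apply: contraNneq fid_neq0 => w0.
by rewrite fid_Lambda_s_chain_bell expect_perfect_chain -stab_weight_overlap w0 mul0r mulr0.
Qed.

Lemma corr_pauli_k1 P s (j : 'I_n.+1) : corr_pauli P s (k1 j) = P s (repnode j).
Proof. by []. Qed.

Lemma corr_pauli_k2 P s (j : 'I_n.+1) : corr_pauli P s (k2 j) = ff.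
Proof. by []. Qed.

(* Condition (A): the syndrome is recovered along [alpha] from the relabelled
   Bell states, since each correction only depends on earlier syndromes. *)
Lemma rep_labels_inj P :
  (exists alpha : {perm 'I_n.+1},
     forall (k : 'I_n.+1) (s s' : syndrome n),
       (forall j : 'I_n.+1, (j < k)%N -> s (alpha j) = s' (alpha j)) ->
       P s (repnode (alpha k)) = P s' (repnode (alpha k))) ->
  injective (rep_labels P).
Proof.
move=> [alpha causal] s s' same_labels.
have agree k : forall j : 'I_n.+1, (j < k)%N -> s (alpha j) = s' (alpha j).
  elim: k => [|k IH] j //; rewrite ltnS leq_eqVlt => /orP [/eqP jk | /IH //].
  have sameP : P s (repnode (alpha j)) = P s' (repnode (alpha j)).
    by apply: causal => j'; rewrite jk; exact: IH.
  move/ffunP/(_ (alpha j)): same_labels.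
  rewrite /rep_labels !ffunE !corr_pauli_k1 !corr_pauli_k2 sameP.
  by move/(can_inj (xorAK _))/(can_inj (xorAK _)).
by apply/ffunP => j; rewrite -(permKV alpha j); apply: (agree n.+1); rewrite ltn_ord.
Qed.

Lemma fid_Lambda_swap_fid P rho : swap_and_correct C P -> fid (Lambda P rho) = swap_fid rho.
Proof.
move=> [causal normalized].
rewrite fid_Lambda_sum /swap_fid [in RHS](reindex_inj (rep_labels_inj causal)) /=.
apply: eq_bigr => s _; rewrite fid_Lambda_s_chain_bell.
under [RHS]eq_bigr do rewrite (stab_weight_eq (stab_weight_end_label (normalized s))) mulrC.
by rewrite sum_mul_eq.
Qed.

End SwapAndCorrect.

Section KleinConvolution.
Variable F : fieldType.
Implicit Types (v : A -> F).

Definition charI v : F := v ff + v ft + v tf + v tt.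
Definition charX v : F := v ff - v ft + v tf - v tt.
Definition charZ v : F := v ff + v ft - v tf - v tt.
Definition charZX v : F := v ff - v ft - v tf + v tt.

(* The convolution of the [w k] over the Klein group [(A, xorA)], obtained by
   Fourier inversion from the products of their characters. *)
Definition klein_conv N (w : 'I_N -> A -> F) (a : A) : F :=
  (\prod_k charI (w k) + (-1) ^+ a.2 * \prod_k charX (w k)
   + (-1) ^+ a.1 * \prod_k charZ (w k) + (-1) ^+ (a.1 (+) a.2) * \prod_k charZX (w k))
  / 4%:R.

Hypothesis char_not2 : (2%:R : F) != 0.

Lemma natr4_neq0 : (4%:R : F) != 0.
Proof. by rewrite -[4%N]/(2 * 2)%N natrM mulf_neq0. Qed.

Lemma klein_conv0 (w : 'I_0 -> A -> F) a : klein_conv w a = (a == ff)%:R.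
Proof.
have := natr4_neq0; rewrite /klein_conv !big_ord0.
by case: a => [[] []] /= ?; field.
Qed.

Lemma klein_conv_rec N (w : 'I_N.+1 -> A -> F) a :
  let w' := fun k => w (widen_ord (leqnSn N) k) in let p := w ord_max in
  klein_conv w a = klein_conv w' ff * p a + klein_conv w' ft * p (xorA a ft)
                   + klein_conv w' tf * p (xorA a tf) + klein_conv w' tt * p (xorA a tt).
Proof.
have := natr4_neq0; rewrite /klein_conv !big_ord_recr /= /charI /charX /charZ /charZX.
by case: a => [[] []] /= ?; field.
Qed.

Lemma klein_conv_sum N (w : 'I_N -> A -> F) : (forall k, charI (w k) = 1) ->
  klein_conv w ff + klein_conv w ft + klein_conv w tf + klein_conv w tt = 1.
Proof.
move=> charI1; have := natr4_neq0; rewrite /klein_conv big1 //.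
by move=> /= ?; field.
Qed.

End KleinConvolution.

Section WernerChain.
Variable R : realFieldType.
Implicit Types (e : R).

Definition near_perfect N (w : 'I_N -> A -> R) e :=
  [/\ forall k a, 0 <= w k a, forall k, charI (w k) = 1 & forall k, 1 - w k ff <= e].

Definition werner_weights N (w : 'I_N -> A -> R) : 'I_N -> A -> R :=
  fun k a => if a == ff then w k ff else (1 - w k ff) / 3%:R.

Lemma werner_near_perfect N (w : 'I_N -> A -> R) e :
  near_perfect w e -> near_perfect (werner_weights w) e.
Proof.
case=> w_ge0 w_sum w_ff; have n3 : (3%:R : R) != 0 by rewrite pnatr_eq0.
split=> [k a | k | k]; rewrite /werner_weights /=.
- case: (a == ff) => //; rewrite divr_ge0 ?ler0n //.
  by move: (w_sum k) (w_ge0 k ft) (w_ge0 k tf) (w_ge0 k tt); rewrite /charI; lra.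
- by rewrite /charI /=; field.
- exact: w_ff.
Qed.

Lemma near_perfect_bell_le N (w : 'I_N -> A -> R) e k a :
  near_perfect w e -> a != ff -> w k a <= e.
Proof.
case=> w_ge0 w_sum w_ff; move: (w_sum k) (w_ff k) (w_ge0 k ft) (w_ge0 k tf) (w_ge0 k tt).
by rewrite /charI; case: a => [[] []] //=; lra.
Qed.

Lemma near_perfect_widen N (w : 'I_N.+1 -> A -> R) e : near_perfect w e ->
  near_perfect (fun k => w (widen_ord (leqnSn N) k)) e.
Proof. by case. Qed.

Lemma klein_conv_near_perfect N (w : 'I_N -> A -> R) e : near_perfect w e ->
  (forall a, 0 <= klein_conv w a) /\ 1 - klein_conv w ff <= N%:R * e.
Proof.
have two := natr2_neq0 R.
elim: N w => [|N IH] w wP.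
  by split=> [a|]; rewrite (klein_conv0 two) ?ler0n //= subrr mul0r.
have w'P := near_perfect_widen wP.
have [r_ge0 r_ff] := IH _ w'P.
have r_sum := klein_conv_sum two (let: And3 _ s _ := w'P in s).
have [w_ge0 w_sum w_ff] := wP.
split=> [a | ]; first by rewrite (klein_conv_rec two) /= !addr_ge0 // mulr_ge0.
rewrite (klein_conv_rec two) /=; set r := klein_conv _ in r_ge0 r_ff r_sum *.
move: (w_sum ord_max) (w_ff ord_max) (w_ge0 ord_max).
set p := w ord_max; rewrite /charI => p_sum p_ff p_ge0.
have := mulr_ge0 (r_ge0 ft) (p_ge0 ft); have := mulr_ge0 (r_ge0 tf) (p_ge0 tf).
have := mulr_ge0 (r_ge0 tt) (p_ge0 tt).
have : 0 <= (1 - r ff) * (1 - p ff).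
  have := r_ge0 ft; have := r_ge0 tf; have := r_ge0 tt.
  by move: (p_ge0 ft) (p_ge0 tf) (p_ge0 tt) => *; apply: mulr_ge0; lra.
by rewrite mulrSr mulrDl mul1r /xorA /=; nra.
Qed.

Lemma bell_step_diff (r s p : A -> R) (m e d : R) :
  (forall a, 0 <= r a) -> (forall a, 0 <= s a) -> (forall a, 0 <= p a) ->
  charI r = 1 -> charI s = 1 -> charI p = 1 ->
  1 - r ff <= m * e -> 1 - s ff <= m * e -> 1 - p ff <= e -> `|r ff - s ff| <= d ->
  `|r ff * p ff + r ft * p ft + r tf * p tf + r tt * p tt
    - (s ff * p ff + s ft * ((1 - p ff) / 3%:R) + s tf * ((1 - p ff) / 3%:R)
       + s tt * ((1 - p ff) / 3%:R))| <= d + m * e ^+ 2.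
Proof.
rewrite /charI => r_ge0 s_ge0 p_ge0 r_sum s_sum p_sum r_ff s_ff p_ff diff_le.
have p_le b : b != ff -> p b <= e.
  by move: (p_ge0 ft) (p_ge0 tf) (p_ge0 tt); case: b => [[] []] //=; lra.
have e_ge0 : 0 <= e by move: (p_le ft isT) (p_ge0 ft); lra.
have head : `|(r ff - s ff) * p ff| <= d.
  rewrite normrM -[d]mulr1 ler_pM ?normr_ge0 // ger0_norm ?p_ge0 //.
  by move: (p_ge0 ft) (p_ge0 tf) (p_ge0 tt); lra.
set tr := r ft * p ft + r tf * p tf + r tt * p tt.
set ts := (s ft + s tf + s tt) * ((1 - p ff) / 3%:R).
rewrite (_ : s ff * p ff + _ + _ + _ = s ff * p ff + ts); last by rewrite /ts; ring.
have tr_bound : 0 <= tr <= m * e ^+ 2.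
  have le_e b : b != ff -> 0 <= r b * (e - p b).
    by move=> nb; rewrite mulr_ge0 // subr_ge0 p_le.
  have r_tail : (r ft + r tf + r tt) * e = (1 - r ff) * e by congr (_ * _); lra.
  have : 0 <= (m * e - (1 - r ff)) * e by rewrite mulr_ge0 // subr_ge0.
  move: (le_e ft isT) (le_e tf isT) (le_e tt isT) (mulr_ge0 (r_ge0 ft) (p_ge0 ft)).
  move: (mulr_ge0 (r_ge0 tf) (p_ge0 tf)) (mulr_ge0 (r_ge0 tt) (p_ge0 tt)).
  by rewrite /tr expr2 => *; apply/andP; split; lra.
have ts_bound : 0 <= ts <= m * e ^+ 2.
  rewrite /ts (_ : s ft + s tf + s tt = 1 - s ff); last by lra.
  have q_ge0 : 0 <= 1 - p ff by move: (p_ge0 ft) (p_ge0 tf) (p_ge0 tt); lra.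
  have s_le1 : 0 <= 1 - s ff by move: (s_ge0 ft) (s_ge0 tf) (s_ge0 tt); lra.
  have := mulr_ge0 s_le1 q_ge0.
  have : 0 <= (1 - s ff) * (e - (1 - p ff)) by rewrite mulr_ge0 // subr_ge0.
  have : 0 <= (m * e - (1 - s ff)) * e by rewrite mulr_ge0 // subr_ge0.
  by rewrite expr2 => *; apply/andP; split; lra.
rewrite (_ : r ff * p ff + _ + _ + _ - _ = (r ff - s ff) * p ff + (tr - ts)); last first.
  by rewrite /tr /ts; ring.
apply: le_trans (ler_normD _ _) _; apply: lerD; first exact: head.
move: tr_bound ts_bound => /andP [? ?] /andP [? ?].
by rewrite ler_norml; apply/andP; split; lra.
Qed.

Lemma klein_conv_werner_diff N (w : 'I_N -> A -> R) e : near_perfect w e ->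
  `|klein_conv w ff - klein_conv (werner_weights w) ff| <= 'C(N, 2)%:R * e ^+ 2.
Proof.
have two := natr2_neq0 R.
elim: N w => [|N IH] w wP; first by rewrite !klein_conv0 // subrr normr0 bin0n mul0r.
have w'P := near_perfect_widen wP; have w'WP := werner_near_perfect w'P.
have [r_ge0 r_ff] := klein_conv_near_perfect w'P.
have [s_ge0 s_ff] := klein_conv_near_perfect w'WP.
have r_sum := klein_conv_sum two (let: And3 _ h _ := w'P in h).
have s_sum := klein_conv_sum two (let: And3 _ h _ := w'WP in h).
have [w_ge0 w_sum w_ff] := wP.
rewrite !(klein_conv_rec two) /= /xorA /= binS bin1 natrD (mulrDl _%:R).
exact: (bell_step_diff r_ge0 s_ge0 (w_ge0 ord_max) r_sum s_sum (w_sum ord_max)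
                       r_ff s_ff (w_ff ord_max) (IH _ w'P)).
Qed.

End WernerChain.

Local Open Scope complex_scope.

Section RealWeights.
Variable R : rcfType.

Lemma normc_real (x : R) : `|x%:C| = `|x|%:C.
Proof.
have [x_ge0 | x_lt0] := lerP 0 x; first by rewrite !ger0_norm // ler0c.
by rewrite !ltr0_norm ?rmorphN // ltcR.
Qed.

Lemma swap_fid_klein_conv n (rhos : 'I_n.+2 -> op R[i] (bool * bool)%type)
    (w : 'I_n.+2 -> A -> R) :
  (forall k a, bell_weight (rhos k) a = (w k a)%:C) ->
  swap_fid (chain_state rhos) = (klein_conv w ff)%:C.
Proof.
move=> wE; rewrite swap_fid_chain_state.
rewrite (eq_bigr _ (fun k _ => trII_bell (rhos k))) (eq_bigr _ (fun k _ => trXX_bell (rhos k))).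
rewrite (eq_bigr _ (fun k _ => trZZ_bell (rhos k))) (eq_bigr _ (fun k _ => trZXZX_bell (rhos k))).
rewrite /klein_conv /= !expr0 !mul1r fmorph_div rmorph_nat !rmorphD /= !rmorph_prod.
by congr ((_ + _ + _ + _) / _); apply: eq_bigr => k _;
  rewrite /charI /charX /charZ /charZX !wE !rmorphD ?rmorphN.
Qed.

Lemma bell_weight_real (rho : op R[i] (bool * bool)%type) a :
  is_density rho -> bell_weight rho a = (complex.Re (bell_weight rho a))%:C.
Proof. by case=> _ psd _; rewrite RRe_real // ger0_real // psd. Qed.

Lemma density_near_perfect n (rhos : 'I_n.+2 -> op R[i] (bool * bool)%type) eps :
  (forall k, is_density (rhos k)) -> (forall k, 1 - fid (rhos k) < eps%:C) ->
  near_perfect (fun k a => complex.Re (bell_weight (rhos k) a)) eps.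
Proof.
move=> dens fid_gt; split=> k.
- by move=> a; rewrite -ler0c -bell_weight_real //; case: (dens k) => _ psd _; exact: psd.
- apply: complexI; rewrite rmorph1 /charI !rmorphD /= -!bell_weight_real // -trII_bell.
  by case: (dens k).
- by apply: ltW; rewrite -ltcR rmorphB rmorph1 /= -bell_weight_real // -fid_bell_weight.
Qed.

End RealWeights.

Theorem theorem2 (R : realType) :
  exists (K delta : R), 0 < delta /\
  forall (n : nat) (rhos : 'I_n.+2 -> op R[i] (bool * bool)%type) (P : protocol n)
         (eps : R),
    (forall k, is_density (rhos k)) ->
    swap_and_correct R[i] P ->
    (forall k, 1 - fid (rhos k) < eps%:C) ->
    (n.+2)%:R * eps < delta ->
    `| fid (Lambda P (chain_state rhos))
       - fid (Lambda P (chain_state (fun k => werner (rhos k)))) |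
      <= ('C(n.+2, 2)%:R * eps ^+ 2 + K * (n.+2)%:R ^+ 3 * eps ^+ 3)%:C.
Proof.
(* The quadratic bound holds exactly, with no cubic correction. *)
exists 0, 1; split=> // n rhos P eps dens sac fid_gt _.
pose w k a := complex.Re (bell_weight (rhos k) a).
have wE k a : bell_weight (rhos k) a = (w k a)%:C by exact: bell_weight_real.
have wWE k a : bell_weight (werner (rhos k)) a = (werner_weights w k a)%:C.
  rewrite bell_weight_werner fid_bell_weight wE /werner_weights.
  by case: (a == ff); rewrite // fmorph_div rmorphB rmorph1 rmorph_nat.
rewrite !(fid_Lambda_swap_fid _ sac) (swap_fid_klein_conv wE) (swap_fid_klein_conv wWE).
rewrite -rmorphB normc_real !mul0r addr0 lecR.
exact: klein_conv_werner_diff (density_near_perfect dens fid_gt).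
Qed.
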